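(* There exists a constant $M$ such that for every $n \ge 1$ and every non-zero polynomial $f(z) = \sum_{i=0}^n a_i z^i$ with $a_i \in \{-1,0,1\}$ for all $0\le i\le n$, the number of $z\in\mathbb{C}$ with $f(z) = 0$ and $|z|\ge\frac{3}{2}$ is at most $M$. *)

From mathcomp Require Import all_boot all_order all_algebra.
From mathcomp Require Import complex.
From mathcomp Require Import Rstruct.
Set Implicit Arguments.
Unset Strict Implicit.
Unset Printing Implicit Defensive.

Definition C : Type := complex Rdefinitions.R.

From mathcomp Require Import all_boot all_order all_algebra.
From mathcomp Require Import complex Rstruct.
From mathcomp Require Import ring.
Set Implicit Arguments.
Unset Strict Implicit.
Unset Printing Implicit Defensive.

Import Order.TTheory GRing.Theory Num.Theory.
Local Open Scope ring_scope.

(* Rescaling by [r = 4/5], i.e. passing to [r^d f(x / r)], keeps the squared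
   coefficient norm of a [{-1,0,1}]-polynomial below [sum_k r^(2k) = 25/9] and
   sends every root of modulus at least [3/2] to a root of modulus at least
   [6/5]. Landau's inequality [|lc p| prod |a| <= ||p||_2], proved by reflecting
   each root [a] to [1 / conj a] (which preserves [||p||_2]), then gives
   [(36/25)^k <= 25/9] for [k] such roots, whence [k <= 2]. *)

Section Landau.
Variable K : numClosedFieldType.
Implicit Types (p h : {poly K}) (a : K) (s : seq K).

Definition sqnorm p : K := \sum_(i < size p) `|p`_i| ^+ 2.

Lemma sqnorm_ge0 p : 0 <= sqnorm p.
Proof. by apply: sumr_ge0 => i _; rewrite exprn_ge0. Qed.

Lemma sqnorm_widen p m : (size p <= m)%N ->
  sqnorm p = \sum_(i < m) `|p`_i| ^+ 2.
Proof.
move=> le_pm; rewrite /sqnorm (big_ord_widen m (fun i => `|p`_i| ^+ 2) le_pm).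
rewrite big_mkcond /=; apply: eq_bigr => i _.
by case: ltnP => // le_pi; rewrite nth_default // normr0 expr0n.
Qed.

Lemma lead_coef_sqnorm_le p : `|lead_coef p| ^+ 2 <= sqnorm p.
Proof.
rewrite /sqnorm /lead_coef; case size_p: (size p) => [|d] /=.
  by rewrite nth_default ?size_p // normr0 expr0n big_ord0.
by rewrite big_ord_recr lerDr sumr_ge0 // => i _; rewrite exprn_ge0.
Qed.

Lemma size_scaleX_sub1 a : (size (a *: 'X - 1 : {poly K})%R <= 2)%N.
Proof.
rewrite (leq_trans (size_polyD _ _)) // geq_max size_polyN size_poly1 andbT.
by rewrite (leq_trans (size_scale_leq _ _)) ?size_polyX.
Qed.

Lemma lead_coef_scaleX_sub1 a : a != 0 -> lead_coef (a *: 'X - 1 : {poly K}) = a.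
Proof.
move=> a_neq0; rewrite lead_coefDl ?lead_coefZ ?lead_coefX ?mulr1 //.
by rewrite size_polyN size_poly1 size_scale // size_polyX.
Qed.

(* Replacing the root [a] by the reflected root [1 / conj a] preserves the
   coefficient norm: the [i]-th squared coefficients differ by
   [(1 - |a|^2) (|h_(i-1)|^2 - |h_i|^2)], which telescopes to [0]. *)
Lemma sqnorm_mulXsubC_reflect h a :
  sqnorm (h * ('X - a%:P)) = sqnorm (h * (a^* *: 'X - 1)).
Proof.
have size_l : (size (h * ('X - a%:P))%R <= (size h).+1)%N.
  by rewrite (leq_trans (size_polyMleq _ _)) // size_XsubC addn2.
have size_r : (size (h * (a^* *: 'X - 1))%R <= (size h).+1)%N.
  rewrite (leq_trans (size_polyMleq _ _)) //.
  by rewrite -subn1 leq_subLR add1n -addn2 leq_add2l size_scaleX_sub1.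
rewrite (sqnorm_widen size_l) (sqnorm_widen size_r).
pose hX i := (h * 'X)`_i.
have coef_diff i : `|(h * ('X - a%:P))`_i| ^+ 2 - `|(h * (a^* *: 'X - 1))`_i| ^+ 2
    = (1 - a * a^*) * (`|hX i| ^+ 2 - `|h`_i| ^+ 2).
  rewrite !mulrBr mulr1 -scalerAr !coefB coefZ coefMC /hX.
  by rewrite !normCK !rmorphB !rmorphM /= conjCK; ring.
apply/eqP; rewrite -subr_eq0 -sumrB.
under eq_bigr do rewrite coef_diff.
rewrite -mulr_sumr sumrB big_ord_recl big_ord_recr /= /hX coefMX /=.
rewrite normr0 expr0n add0r nth_default // normr0 expr0n addr0.
under eq_bigr do rewrite coefMX /=.
by rewrite subrr mulr0.
Qed.

Lemma sqnorm_mul_prodXsubC_reflect h s :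
  sqnorm (h * \prod_(a <- s) ('X - a%:P)) = sqnorm (h * \prod_(a <- s) (a^* *: 'X - 1)).
Proof.
elim: s h => [|a s IHs] h; first by rewrite !big_nil.
rewrite !big_cons [in LHS]mulrA [in LHS]mulrAC sqnorm_mulXsubC_reflect.
by rewrite mulrAC IHs mulrA.
Qed.

Lemma landau_sq p s : uniq s -> all (root p) s ->
  `|lead_coef p| ^+ 2 * \prod_(a <- s) `|a| ^+ 2 <= sqnorm p.
Proof.
move=> s_uniq s_roots.
have [s0 | s_neq0] := boolP (0 \in s).
  by rewrite (big_rem 0) //= normr0 expr0n mul0r !mulr0 sqnorm_ge0.
have [q ->] := uniq_roots_prod_XsubC s_roots (etrans (uniq_rootsE s) s_uniq).
rewrite sqnorm_mul_prodXsubC_reflect lead_coefM lead_coef_prod_XsubC mulr1.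
apply: le_trans (lead_coef_sqnorm_le _).
rewrite lead_coefM lead_coef_prod normrM exprMn normr_prod -prodrXl.
rewrite [X in _ <= _ * X](eq_big_seq (fun a => `|a| ^+ 2)) // => a a_s.
rewrite lead_coef_scaleX_sub1 ?norm_conjC // conjC_eq0.
by apply: contraNneq s_neq0 => <-.
Qed.

End Landau.

Section Rescale.
Variable R : comNzRingType.
Implicit Types (f : {poly R}) (r z : R).

(* [rescale r f] is [r ^ deg f * f (x / r)]: its roots are those of [f]
   multiplied by [r], and it is defined without dividing by [r]. *)
Definition rescale r f : {poly R} := \poly_(i < size f) (f`_i * r ^+ ((size f).-1 - i)).

Lemma coef_rescale r f i : (rescale r f)`_i = f`_i * r ^+ ((size f).-1 - i).
Proof.
by rewrite coef_poly; case: ltnP => // le_fi; rewrite nth_default ?mul0r.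
Qed.

Lemma size_rescale r f : size (rescale r f) = size f.
Proof.
have [-> | f_neq0] := eqVneq f 0.
  by rewrite /rescale size_poly0 poly_def big_ord0 size_poly0.
by apply: size_poly_eq; rewrite subnn expr0 mulr1 -lead_coefE lead_coef_eq0.
Qed.

Lemma lead_coef_rescale r f : lead_coef (rescale r f) = lead_coef f.
Proof. by rewrite lead_coefE size_rescale coef_rescale subnn expr0 mulr1. Qed.

Lemma horner_rescale r f z : (rescale r f).[r * z] = r ^+ (size f).-1 * f.[z].
Proof.
rewrite horner_poly horner_coef mulr_sumr; apply: eq_bigr => i _.
have le_id : (i <= (size f).-1)%N by rewrite -ltnS (ltn_predK (ltn_ord i)).
by rewrite -{2}(subnK le_id) exprD exprMn; ring.
Qed.

Lemma root_rescale r f z : root f z -> root (rescale r f) (r * z).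
Proof. by rewrite /root horner_rescale => /eqP ->; rewrite mulr0. Qed.

End Rescale.

Lemma geometric_sum_le (F : numFieldType) (q : F) n : 0 <= q -> q < 1 ->
  \sum_(i < n) q ^+ i <= (1 - q)^-1.
Proof.
move=> q_ge0 q_lt1; have q1_gt0 : 0 < 1 - q by rewrite subr_gt0.
rewrite -[X in _ <= X]mulr1 ler_pdivlMl // -opprB mulNr -subrX1.
by rewrite opprB gerBl exprn_ge0.
Qed.

Lemma prodr_ge_exp (F : numDomainType) (I : eqType) (s : seq I) (E : I -> F) a :
  0 <= a -> (forall x, x \in s -> a <= E x) -> a ^+ size s <= \prod_(x <- s) E x.
Proof.
move=> a_ge0; elim: s => [|x s IHs] E_ge; first by rewrite big_nil expr0.
have Ex_ge := E_ge x (mem_head x s).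
rewrite big_cons exprS ler_pM ?exprn_ge0 // IHs // => y ys.
by apply: E_ge; rewrite inE ys orbT.
Qed.

Section ScaledRoots.
Variable K : numClosedFieldType.
Implicit Types (f : {poly K}) (r : K) (s : seq K).

Lemma sqnorm_rescale_le r f : 0 <= r -> r < 1 -> (forall i, `|f`_i| <= 1) ->
  sqnorm (rescale r f) <= (1 - r ^+ 2)^-1.
Proof.
move=> r_ge0 r_lt1 f_le1; have r2_lt1 : r ^+ 2 < 1 by rewrite exprn_ilt1.
apply: le_trans (geometric_sum_le (size f) (exprn_ge0 2 r_ge0) r2_lt1).
rewrite /sqnorm size_rescale [X in _ <= X](reindex_inj rev_ord_inj) /=.
apply: ler_sum => i _; rewrite coef_rescale normrM exprMn normrX (ger0_norm r_ge0).
rewrite subnS predn_sub [X in _ * X <= _]exprAC ler_piMl ?exprn_ge0 //.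
by rewrite expr_le1.
Qed.

Lemma lead_prod_scaled_roots_le r f s : 0 < r -> r < 1 -> (forall i, `|f`_i| <= 1) ->
  uniq s -> all (root f) s ->
  `|lead_coef f| ^+ 2 * \prod_(z <- s) `|r * z| ^+ 2 <= (1 - r ^+ 2)^-1.
Proof.
move=> r_gt0 r_lt1 f_le1 s_uniq s_roots.
apply: le_trans (sqnorm_rescale_le (ltW r_gt0) r_lt1 f_le1).
rewrite -(lead_coef_rescale r) -(big_map (fun z => r * z) predT (fun a => `|a| ^+ 2)).
apply: landau_sq.
  by rewrite map_inj_uniq // => x y /mulfI; apply; rewrite gt_eqF.
by apply/allP => _ /mapP [z z_s ->]; apply/root_rescale/(allP s_roots).
Qed.

Lemma size_large_roots_le2 f s : `|lead_coef f| = 1 -> (forall i, `|f`_i| <= 1) ->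
  uniq s -> (forall z, z \in s -> root f z /\ 3%:R / 2%:R <= `|z|) -> (size s <= 2)%N.
Proof.
move=> lead_f f_le1 s_uniq s_large.
pose r : K := 4%:R / 5%:R; pose c : K := 36%:R / 25%:R.
have r_gt0 : 0 < r by rewrite divr_gt0 ?ltr0n.
have r_lt1 : r < 1 by rewrite ltr_pdivrMr ?ltr0n // mul1r ltr_nat.
have c_gt1 : 1 < c by rewrite ltr_pdivlMr ?ltr0n // mul1r ltr_nat.
have c_le z : z \in s -> c <= `|r * z| ^+ 2.
  move=> /s_large [_ z_ge].
  have three_halves_ge0 : 0 <= 3%:R / 2%:R :> K by rewrite divr_ge0.
  rewrite normrM (ger0_norm (ltW r_gt0)) [(_ * _) ^+ 2]exprMn.
  have -> : c = r ^+ 2 * (3%:R / 2%:R) ^+ 2 by rewrite /c /r; field.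
  rewrite ler_pM2l ?exprn_gt0 //.
  by rewrite lerXn2r // nnegrE (le_trans three_halves_ge0).
have roots_s : all (root f) s by apply/allP => z /s_large [].
have := lead_prod_scaled_roots_le r_gt0 r_lt1 f_le1 s_uniq roots_s.
have c_ge0 : 0 <= c := ltW (lt_trans ltr01 c_gt1).
rewrite lead_f expr1n mul1r => /(le_trans (prodr_ge_exp c_ge0 c_le)).
have c3_gt : (1 - r ^+ 2)^-1 < c ^+ 3.
  rewrite -subr_gt0 (_ : _ - _ = 29279%:R / 140625%:R) ?divr_gt0 ?ltr0n //.
  by rewrite /c /r; field.
rewrite leqNgt -(ler_eXn2l c_gt1) => c_pow_le; apply/negP => /le_trans/(_ c_pow_le).
by rewrite lt_geF.
Qed.

End ScaledRoots.

Lemma norm_le1_trit (R : numDomainType) (x : R) : x \in [:: -1; 0; 1] -> `|x| <= 1.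
Proof. by rewrite !inE => /or3P [] /eqP ->; rewrite ?normrN ?normr1 ?normr0 ?ler01. Qed.

Lemma norm_eq1_trit (R : numDomainType) (x : R) :
  x \in [:: -1; 0; 1] -> x != 0 -> `|x| = 1.
Proof. by rewrite !inE => /or3P [] /eqP ->; rewrite ?eqxx ?normrN ?normr1. Qed.

Theorem claim2p1 :
  exists M : nat,
  forall (n : nat), (1 <= n)%N ->
  forall f : {poly C},
    f != 0 ->
    (size f <= n.+1)%N ->
    (forall i : nat, (i <= n)%N -> f`_i \in [:: -1; 0; 1]) ->
    forall s : seq C,
      uniq s ->
      (forall z, z \in s -> root f z /\ 3%:R / 2%:R <= `|z|) ->
      (size s <= M)%N.
Proof.
exists 2%N => n _ f f_neq0 size_f f_trit s s_uniq s_large.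
have coef_trit i : (i < size f)%N -> f`_i \in [:: -1; 0; 1].
  by move=> lt_if; apply: f_trit; rewrite -ltnS (leq_trans lt_if).
have f_le1 i : `|f`_i| <= 1.
  have [/coef_trit/norm_le1_trit // | le_fi] := ltnP i (size f).
  by rewrite nth_default ?normr0.
have lead_f : `|lead_coef f| = 1.
  by rewrite norm_eq1_trit ?lead_coef_eq0 // lead_coefE coef_trit // ltn_predL size_poly_gt0.
exact: size_large_roots_le2 lead_f f_le1 s_uniq s_large.
Qed.
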